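(* Let $\mathfrak{g}$ be the following computad. - Objects: $\mathsf{0},\mathsf{1},\mathsf{2}$. - Arrows: $d\colon\mathsf{0}\to\mathsf{1}$, $d^0,d^1\colon\mathsf{1}\to\mathsf{2}$, and $s^0\colon\mathsf{2}\to\mathsf{1}$. - $2$-cells: $n_0\colon s^0 d^0\Rightarrow \mathrm{id}_{\mathsf{1}}$, $n_1\colon \mathrm{id}_{\mathsf{1}}\Rightarrow s^0 d^1$, and $\vartheta\colon d^1 d\Rightarrow d^0 d$. Then the locally thin $2$-category $\overline{\mathcal{M}_2}\mathcal{F}_2(\mathfrak{g})$ is not a free $2$-category. In particular, $\mathcal{F}_2(\mathfrak{g})$ and $\overline{\mathcal{L}_2}\mathcal{F}_2(\mathfrak{g})$ are not locally thin.
   Context: A computad consists of a small graph $G$ and a set of $2$-cells $\alpha$, each given by a pair of parallel morphisms $\alpha\colon f\Rightarrow g$ in the free category on $G$. $\mathcal{F}_2(\mathfrak{g})$ is the $2$-category freely generated by the computad $\mathfrak{g}$. Its underlying category is the free category on the graph. Its $2$-cells are freely generated by the given $2$-cells under vertical and horizontal composition and whiskering, subject only to the $2$-category axioms. A $2$-category is free if it is isomorphic to $\mathcal{F}_2(\mathfrak{h})$ for some computad $\mathfrak{h}$. $\overline{\mathcal{L}_2}$ is the left adjoint to the inclusion of locally groupoidal $2$-categories (all $2$-cells invertible) into $2$-categories; it freely inverts $2$-cells. $\overline{\mathcal{M}_2}$ is the left adjoint to the inclusion of locally thin $2$-categories (each hom-category has at most one $2$-cell between any two $1$-cells) into $2$-categories;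 it identifies parallel $2$-cells. *)

From Stdlib Require Import List.
Import ListNotations.

(** Composition of 1-cells and of 2-cells is written in diagrammatic order:
    [comp1 f g] is "f then g" (= g ∘ f), [vcomp a b] is "a then b",
    [hcomp a b] for a : f => f' (x -> y), b : g => g' (y -> z) is
    a * b : comp1 f g => comp1 f' g'.  The composition operations are total
    functions, but are only constrained (and only meaningful) on composable
    arguments. *)
Record TwoCat := {
  Ob : Type; Ar : Type; Ce : Type;
  src1 : Ar -> Ob; tgt1 : Ar -> Ob;
  src2 : Ce -> Ar; tgt2 : Ce -> Ar;
  id1 : Ob -> Ar; id2 : Ar -> Ce;
  comp1 : Ar -> Ar -> Ar;
  vcomp : Ce -> Ce -> Ce;
  hcomp : Ce -> Ce -> Ce;
  glob_src : forall a, src1 (src2 a) = src1 (tgt2 a);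
  glob_tgt : forall a, tgt1 (src2 a) = tgt1 (tgt2 a);
  id1_src : forall x, src1 (id1 x) = x;
  id1_tgt : forall x, tgt1 (id1 x) = x;
  comp1_src : forall f g, tgt1 f = src1 g -> src1 (comp1 f g) = src1 f;
  comp1_tgt : forall f g, tgt1 f = src1 g -> tgt1 (comp1 f g) = tgt1 g;
  comp1_idl : forall f, comp1 (id1 (src1 f)) f = f;
  comp1_idr : forall f, comp1 f (id1 (tgt1 f)) = f;
  comp1_assoc : forall f g h, tgt1 f = src1 g -> tgt1 g = src1 h ->
      comp1 (comp1 f g) h = comp1 f (comp1 g h);
  id2_src : forall f, src2 (id2 f) = f;
  id2_tgt : forall f, tgt2 (id2 f) = f;
  vcomp_src : forall a b, tgt2 a = src2 b -> src2 (vcomp a b) = src2 a;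
  vcomp_tgt : forall a b, tgt2 a = src2 b -> tgt2 (vcomp a b) = tgt2 b;
  vcomp_idl : forall a, vcomp (id2 (src2 a)) a = a;
  vcomp_idr : forall a, vcomp a (id2 (tgt2 a)) = a;
  vcomp_assoc : forall a b c, tgt2 a = src2 b -> tgt2 b = src2 c ->
      vcomp (vcomp a b) c = vcomp a (vcomp b c);
  hcomp_src : forall a b, tgt1 (src2 a) = src1 (src2 b) ->
      src2 (hcomp a b) = comp1 (src2 a) (src2 b);
  hcomp_tgt : forall a b, tgt1 (src2 a) = src1 (src2 b) ->
      tgt2 (hcomp a b) = comp1 (tgt2 a) (tgt2 b);
  hcomp_id2 : forall f g, tgt1 f = src1 g ->
      hcomp (id2 f) (id2 g) = id2 (comp1 f g);
  hcomp_idl : forall a, hcomp (id2 (id1 (src1 (src2 a)))) a = a;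
  hcomp_idr : forall a, hcomp a (id2 (id1 (tgt1 (src2 a)))) = a;
  hcomp_assoc : forall a b c,
      tgt1 (src2 a) = src1 (src2 b) -> tgt1 (src2 b) = src1 (src2 c) ->
      hcomp (hcomp a b) c = hcomp a (hcomp b c);
  interchange : forall a a' b b',
      tgt2 a = src2 a' -> tgt2 b = src2 b' -> tgt1 (src2 a) = src1 (src2 b) ->
      hcomp (vcomp a a') (vcomp b b') = vcomp (hcomp a b) (hcomp a' b')
}.

Arguments src1 {_} _. Arguments tgt1 {_} _. Arguments src2 {_} _.
Arguments tgt2 {_} _. Arguments id1 {_} _. Arguments id2 {_} _.
Arguments comp1 {_} _ _. Arguments vcomp {_} _ _. Arguments hcomp {_} _ _.

Record TwoFun (C D : TwoCat) := {
  fO : Ob C -> Ob D; fA : Ar C -> Ar D; fC : Ce C -> Ce D;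
  fun_src1 : forall f, src1 (fA f) = fO (src1 f);
  fun_tgt1 : forall f, tgt1 (fA f) = fO (tgt1 f);
  fun_src2 : forall a, src2 (fC a) = fA (src2 a);
  fun_tgt2 : forall a, tgt2 (fC a) = fA (tgt2 a);
  fun_id1 : forall x, fA (id1 x) = id1 (fO x);
  fun_id2 : forall f, fC (id2 f) = id2 (fA f);
  fun_comp1 : forall f g, tgt1 f = src1 g -> fA (comp1 f g) = comp1 (fA f) (fA g);
  fun_vcomp : forall a b, tgt2 a = src2 b -> fC (vcomp a b) = vcomp (fC a) (fC b);
  fun_hcomp : forall a b, tgt1 (src2 a) = src1 (src2 b) ->
      fC (hcomp a b) = hcomp (fC a) (fC b)
}.
Arguments fO {_ _} _ _. Arguments fA {_ _} _ _. Arguments fC {_ _} _ _.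

Definition fun_eq {C D : TwoCat} (F G : TwoFun C D) : Prop :=
  (forall x, fO F x = fO G x) /\ (forall f, fA F f = fA G f) /\
  (forall a, fC F a = fC G a).

Definition comp_eq {B C D : TwoCat} (F : TwoFun B C) (H : TwoFun C D)
  (G : TwoFun B D) : Prop :=
  (forall x, fO H (fO F x) = fO G x) /\ (forall f, fA H (fA F f) = fA G f) /\
  (forall a, fC H (fC F a) = fC G a).

Definition iso_TwoCat (C D : TwoCat) : Prop :=
  exists (F : TwoFun C D) (G : TwoFun D C),
    (forall x, fO G (fO F x) = x) /\ (forall f, fA G (fA F f) = f) /\
    (forall a, fC G (fC F a) = a) /\
    (forall y, fO F (fO G y) = y) /\ (forall g, fA F (fA G g) = g) /\
    (forall b, fC F (fC G b) = b).

Definition locally_thin (C : TwoCat) : Prop :=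
  forall a b : Ce C, src2 a = src2 b -> tgt2 a = tgt2 b -> a = b.

Definition locally_groupoidal (C : TwoCat) : Prop :=
  forall a : Ce C, exists b : Ce C,
    src2 b = tgt2 a /\ tgt2 b = src2 a /\
    vcomp a b = id2 (src2 a) /\ vcomp b a = id2 (tgt2 a).

(** Reflections: [q : C -> M] exhibits [M] as the free locally thin
    (resp. locally groupoidal) 2-category on [C], i.e. [M = \bar M_2 C]
    (resp. [\bar L_2 C]) with unit [q]. *)
Definition reflection_along (P : TwoCat -> Prop) (C M : TwoCat)
  (q : TwoFun C M) : Prop :=
  P M /\
  forall (X : TwoCat), P X -> forall G : TwoFun C X,
    (exists H : TwoFun M X, comp_eq q H G) /\
    (forall H1 H2 : TwoFun M X, comp_eq q H1 G -> comp_eq q H2 G -> fun_eq H1 H2).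

Definition is_M2bar (C M : TwoCat) (q : TwoFun C M) : Prop :=
  reflection_along locally_thin C M q.
Definition is_L2bar (C L : TwoCat) (q : TwoFun C L) : Prop :=
  reflection_along locally_groupoidal C L q.

(** * Computads.  A path in the free category on the graph is a start
    vertex together with a list of composable edges (diagrammatic order). *)
Fixpoint path_valid {V E : Type} (es et : E -> V) (v : V) (l : list E) : Prop :=
  match l with
  | [] => True
  | e :: l' => es e = v /\ path_valid es et (et e) l'
  end.

Fixpoint path_end {V E : Type} (et : E -> V) (v : V) (l : list E) : V :=
  match l with
  | [] => v
  | e :: l' => path_end et (et e) l'
  end.

Record Computad := {
  cV : Type; cE : Type;
  csrc : cE -> cV; ctgt : cE -> cV;
  cT : Type;
  cTsrc : cT -> cV * list cE;
  cTtgt : cT -> cV * list cE;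
  cTsrc_valid : forall t, path_valid csrc ctgt (fst (cTsrc t)) (snd (cTsrc t));
  cTtgt_valid : forall t, path_valid csrc ctgt (fst (cTtgt t)) (snd (cTtgt t));
  cT_par_src : forall t, fst (cTsrc t) = fst (cTtgt t);
  cT_par_tgt : forall t, path_end ctgt (fst (cTsrc t)) (snd (cTsrc t))
                        = path_end ctgt (fst (cTtgt t)) (snd (cTtgt t))
}.

Definition eval_path {V E : Type} (C : TwoCat) (dO : V -> Ob C) (dA : E -> Ar C)
  (p : V * list E) : Ar C :=
  fold_left (fun acc e => comp1 acc (dA e)) (snd p) (id1 (dO (fst p))).

(** A diagram of shape [g] in [C], i.e. a computad morphism from [g] to the
    underlying computad of [C]. *)
Record Diagram (g : Computad) (C : TwoCat) := {
  dO : cV g -> Ob C; dA : cE g -> Ar C; dC : cT g -> Ce C;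
  dA_src : forall e, src1 (dA e) = dO (csrc g e);
  dA_tgt : forall e, tgt1 (dA e) = dO (ctgt g e);
  dC_src : forall t, src2 (dC t) = eval_path C dO dA (cTsrc g t);
  dC_tgt : forall t, tgt2 (dC t) = eval_path C dO dA (cTtgt g t)
}.
Arguments dO {_ _} _ _. Arguments dA {_ _} _ _. Arguments dC {_ _} _ _.

Definition diag_comp_eq {g : Computad} {C X : TwoCat} (D : Diagram g C)
  (H : TwoFun C X) (D' : Diagram g X) : Prop :=
  (forall v, fO H (dO D v) = dO D' v) /\ (forall e, fA H (dA D e) = dA D' e) /\
  (forall t, fC H (dC D t) = dC D' t).

(** [D] exhibits [C] as the 2-category freely generated by [g],
    i.e. [C = F_2(g)] (universal property of the left adjoint). *)
Definition free_on (g : Computad) (C : TwoCat) (D : Diagram g C) : Prop :=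
  forall (X : TwoCat) (D' : Diagram g X),
    (exists H : TwoFun C X, diag_comp_eq D H D') /\
    (forall H1 H2 : TwoFun C X, diag_comp_eq D H1 D' -> diag_comp_eq D H2 D' ->
       fun_eq H1 H2).

Definition is_free (C : TwoCat) : Prop :=
  exists (h : Computad) (F : TwoCat) (D : Diagram h F),
    free_on h F D /\ iso_TwoCat F C.

Inductive gV := g0 | g1 | g2.
Inductive gE := e_d | e_d0 | e_d1 | e_s0.
Inductive gT := t_n0 | t_n1 | t_theta.

Definition gE_src (e : gE) : gV :=
  match e with e_d => g0 | e_d0 => g1 | e_d1 => g1 | e_s0 => g2 end.
Definition gE_tgt (e : gE) : gV :=
  match e with e_d => g1 | e_d0 => g2 | e_d1 => g2 | e_s0 => g1 end.

(* n_0 : s^0 d^0 => id_1 ;  n_1 : id_1 => s^0 d^1 ;  theta : d^1 d => d^0 d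
   (paths are in diagrammatic order, so s^0 d^0 = [d^0; s^0]). *)
Definition gT_src (t : gT) : gV * list gE :=
  match t with
  | t_n0 => (g1, [e_d0; e_s0])
  | t_n1 => (g1, [])
  | t_theta => (g0, [e_d; e_d1])
  end.
Definition gT_tgt (t : gT) : gV * list gE :=
  match t with
  | t_n0 => (g1, [])
  | t_n1 => (g1, [e_d1; e_s0])
  | t_theta => (g0, [e_d; e_d0])
  end.

Lemma gT_src_valid : forall t, path_valid gE_src gE_tgt (fst (gT_src t)) (snd (gT_src t)).
Proof. destruct t; simpl; repeat split. Qed.
Lemma gT_tgt_valid : forall t, path_valid gE_src gE_tgt (fst (gT_tgt t)) (snd (gT_tgt t)).
Proof. destruct t; simpl; repeat split. Qed.
Lemma gT_par_src : forall t, fst (gT_src t) = fst (gT_tgt t).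
Proof. destruct t; reflexivity. Qed.
Lemma gT_par_tgt : forall t, path_end gE_tgt (fst (gT_src t)) (snd (gT_src t))
                          = path_end gE_tgt (fst (gT_tgt t)) (snd (gT_tgt t)).
Proof. destruct t; reflexivity. Qed.

Definition frak_g : Computad :=
  {| cV := gV; cE := gE; csrc := gE_src; ctgt := gE_tgt; cT := gT;
     cTsrc := gT_src; cTtgt := gT_tgt;
     cTsrc_valid := gT_src_valid; cTtgt_valid := gT_tgt_valid;
     cT_par_src := gT_par_src; cT_par_tgt := gT_par_tgt |}.

(* In a free 2-category, weighting every generating 2-cell by 1 shows that a
   2-cell with a retraction has weight 0 and is therefore an identity; so two
   1-cells joined by 2-cells in both directions are equal.  In F_2(g) the
   pastings  d n_1 : d => s^0 d^1 d  and  (theta s^0) ; (d n_0) : s^0 d^1 d => d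
   become inverse in any locally thin quotient, and a free one would identify
   d with s^0 d^1 d, which counting occurrences of s^0 rules out.  Their
   composite d => d is sent to 1 by the 2-functor to Z counting theta, so it is
   not an identity, not even after inverting 2-cells. *)

From Stdlib Require Import ClassicalEpsilon ProofIrrelevance Lia ZArith.

(* 2-cells of [Weighted C rigid] are parallel pairs of 1-cells of [C] with a
   weight; when [rigid] holds, weight 0 forces the pair to be an identity.
   [Weighted C false] is only used with weight 0, as the codiscrete 2-category
   on the underlying category of [C]. *)
Section Weighted.
Variables (C : TwoCat) (rigid : bool).

Record wcell := mkW {
  ws : Ar C; wt : Ar C; wn : nat;
  wpar_src : src1 ws = src1 wt;
  wpar_tgt : tgt1 ws = tgt1 wt;
  wrigid : rigid = true -> wn = 0 -> ws = wt }.

Lemma wcell_eq (x y : wcell) : ws x = ws y -> wt x = wt y -> wn x = wn y -> x = y.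
Proof.
  destruct x, y; simpl; intros; subst.
  f_equal; apply proof_irrelevance.
Qed.

Definition wid2 (f : Ar C) : wcell := mkW f f 0 eq_refl eq_refl (fun _ _ => eq_refl).

Section VerticalComposite.
Variables (x y : wcell).
Hypothesis xy : wt x = ws y.

Lemma wvcomp_par_src : src1 (ws x) = src1 (wt y).
Proof. rewrite (wpar_src x), xy. apply wpar_src. Qed.

Lemma wvcomp_par_tgt : tgt1 (ws x) = tgt1 (wt y).
Proof. rewrite (wpar_tgt x), xy. apply wpar_tgt. Qed.

Lemma wvcomp_rigid : rigid = true -> wn x + wn y = 0 -> ws x = wt y.
Proof.
  intros r n. rewrite (wrigid x r) by lia. rewrite xy. apply (wrigid y r). lia.
Qed.
End VerticalComposite.

Section HorizontalComposite.
Variables (x y : wcell).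
Hypothesis xy : tgt1 (ws x) = src1 (ws y).

Lemma whcomp_composable : tgt1 (wt x) = src1 (wt y).
Proof. rewrite <- (wpar_tgt x), xy. apply wpar_src. Qed.

Lemma whcomp_par_src : src1 (comp1 (ws x) (ws y)) = src1 (comp1 (wt x) (wt y)).
Proof.
  rewrite comp1_src, comp1_src by (apply whcomp_composable || assumption).
  apply wpar_src.
Qed.

Lemma whcomp_par_tgt : tgt1 (comp1 (ws x) (ws y)) = tgt1 (comp1 (wt x) (wt y)).
Proof.
  rewrite comp1_tgt, comp1_tgt by (apply whcomp_composable || assumption).
  apply wpar_tgt.
Qed.

Lemma whcomp_rigid :
  rigid = true -> wn x + wn y = 0 -> comp1 (ws x) (ws y) = comp1 (wt x) (wt y).
Proof. intros r n. rewrite (wrigid x r), (wrigid y r) by lia. reflexivity. Qed.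
End HorizontalComposite.

(* Composites of non-composable cells are junk; returning [x] is arbitrary. *)
Definition wvcomp (x y : wcell) : wcell :=
  match excluded_middle_informative (wt x = ws y) with
  | left e => mkW (ws x) (wt y) (wn x + wn y)
                (wvcomp_par_src x y e) (wvcomp_par_tgt x y e) (wvcomp_rigid x y e)
  | right _ => x
  end.

Definition whcomp (x y : wcell) : wcell :=
  match excluded_middle_informative (tgt1 (ws x) = src1 (ws y)) with
  | left e => mkW (comp1 (ws x) (ws y)) (comp1 (wt x) (wt y)) (wn x + wn y)
                (whcomp_par_src x y e) (whcomp_par_tgt x y e) (whcomp_rigid x y)
  | right _ => x
  end.

Lemma ws_wvcomp x y : ws (wvcomp x y) = ws x.
Proof. unfold wvcomp; destruct excluded_middle_informative; reflexivity. Qed.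

Lemma wt_wvcomp x y : wt x = ws y -> wt (wvcomp x y) = wt y.
Proof. unfold wvcomp; destruct excluded_middle_informative; simpl; tauto. Qed.

Lemma wn_wvcomp x y : wt x = ws y -> wn (wvcomp x y) = wn x + wn y.
Proof. unfold wvcomp; destruct excluded_middle_informative; simpl; tauto. Qed.

Lemma ws_whcomp x y :
  tgt1 (ws x) = src1 (ws y) -> ws (whcomp x y) = comp1 (ws x) (ws y).
Proof. unfold whcomp; destruct excluded_middle_informative; simpl; tauto. Qed.

Lemma wt_whcomp x y :
  tgt1 (ws x) = src1 (ws y) -> wt (whcomp x y) = comp1 (wt x) (wt y).
Proof. unfold whcomp; destruct excluded_middle_informative; simpl; tauto. Qed.

Lemma wn_whcomp x y : tgt1 (ws x) = src1 (ws y) -> wn (whcomp x y) = wn x + wn y.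
Proof. unfold whcomp; destruct excluded_middle_informative; simpl; tauto. Qed.

Definition Weighted : TwoCat.
Proof.
  refine {| Ob := Ob C; Ar := Ar C; Ce := wcell;
    src1 := @src1 C; tgt1 := @tgt1 C; src2 := ws; tgt2 := wt;
    id1 := @id1 C; id2 := wid2; comp1 := @comp1 C;
    vcomp := wvcomp; hcomp := whcomp |}.
  all: try solve [apply wpar_src | apply wpar_tgt | apply id1_src | apply id1_tgt
                 | apply comp1_src | apply comp1_tgt | apply comp1_idl
                 | apply comp1_idr | apply comp1_assoc | reflexivity
                 | intros; apply ws_wvcomp | intros; apply wt_wvcomp; assumption
                 | intros; apply ws_whcomp; assumption
                 | intros; apply wt_whcomp; assumption].
  - intro a. apply wcell_eq.
    + rewrite ws_wvcomp. reflexivity.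
    + apply wt_wvcomp; reflexivity.
    + apply wn_wvcomp; reflexivity.
  - intro a. apply wcell_eq.
    + apply ws_wvcomp.
    + rewrite wt_wvcomp; reflexivity.
    + rewrite wn_wvcomp by reflexivity. simpl; lia.
  - intros a b c ab bc.
    assert (abc : wt (wvcomp a b) = ws c) by (rewrite wt_wvcomp; assumption).
    assert (a_bc : wt a = ws (wvcomp b c)) by (rewrite ws_wvcomp; assumption).
    apply wcell_eq.
    + rewrite !ws_wvcomp. reflexivity.
    + rewrite !wt_wvcomp by assumption. reflexivity.
    + rewrite wn_wvcomp, wn_wvcomp, wn_wvcomp, wn_wvcomp by assumption. lia.
  - intros f g fg. apply wcell_eq; simpl.
    + apply ws_whcomp; assumption.
    + apply wt_whcomp; assumption.
    + apply wn_whcomp; assumption.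
  - intro a.
    assert (e : tgt1 (ws (wid2 (id1 (src1 (ws a))))) = src1 (ws a)) by apply id1_tgt.
    apply wcell_eq; rewrite ?ws_whcomp, ?wt_whcomp, ?wn_whcomp by exact e; simpl.
    + apply comp1_idl.
    + rewrite (wpar_src a). apply comp1_idl.
    + reflexivity.
  - intro a.
    assert (e : tgt1 (ws a) = src1 (ws (wid2 (id1 (tgt1 (ws a)))))) by (symmetry; apply id1_src).
    apply wcell_eq; rewrite ?ws_whcomp, ?wt_whcomp, ?wn_whcomp by exact e; simpl.
    + apply comp1_idr.
    + rewrite (wpar_tgt a). apply comp1_idr.
    + lia.
  - intros a b c ab bc.
    assert (ab_c : tgt1 (ws (whcomp a b)) = src1 (ws c))
      by (rewrite ws_whcomp, comp1_tgt; assumption).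
    assert (a_bc : tgt1 (ws a) = src1 (ws (whcomp b c)))
      by (rewrite ws_whcomp, comp1_src; assumption).
    pose proof (whcomp_composable a b ab). pose proof (whcomp_composable b c bc).
    apply wcell_eq.
    + rewrite (ws_whcomp _ _ ab_c), (ws_whcomp _ _ a_bc), !ws_whcomp by assumption.
      apply comp1_assoc; assumption.
    + rewrite (wt_whcomp _ _ ab_c), (wt_whcomp _ _ a_bc), !wt_whcomp by assumption.
      apply comp1_assoc; assumption.
    + rewrite (wn_whcomp _ _ ab_c), (wn_whcomp _ _ a_bc), !wn_whcomp by assumption.
      lia.
  - intros a a' b b' aa' bb' ab.
    assert (ab_v : tgt1 (ws (wvcomp a a')) = src1 (ws (wvcomp b b')))
      by (rewrite !ws_wvcomp; assumption).
    assert (ab' : tgt1 (ws a') = src1 (ws b')).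
    { rewrite <- aa', <- bb', <- (wpar_tgt a), <- (wpar_src b). assumption. }
    assert (h_v : wt (whcomp a b) = ws (whcomp a' b')).
    { rewrite wt_whcomp, ws_whcomp, aa', bb' by assumption. reflexivity. }
    apply wcell_eq.
    + rewrite (ws_whcomp _ _ ab_v), !ws_wvcomp, ws_whcomp by assumption. reflexivity.
    + rewrite (wt_whcomp _ _ ab_v), (wt_wvcomp _ _ h_v), !wt_wvcomp, wt_whcomp
        by assumption.
      reflexivity.
    + rewrite (wn_whcomp _ _ ab_v), (wn_wvcomp _ _ h_v), !wn_wvcomp, !wn_whcomp
        by assumption.
      lia.
Defined.

End Weighted.

Arguments mkW {C rigid}. Arguments ws {C rigid}. Arguments wt {C rigid}.
Arguments wn {C rigid}. Arguments wpar_src {C rigid}. Arguments wpar_tgt {C rigid}.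
Arguments wrigid {C rigid}.

Definition twofun_comp {B C D : TwoCat} (F : TwoFun B C) (G : TwoFun C D) : TwoFun B D.
Proof.
  refine {| fO := fun x => fO G (fO F x); fA := fun f => fA G (fA F f);
            fC := fun a => fC G (fC F a) |}.
  - intro f. rewrite !fun_src1. reflexivity.
  - intro f. rewrite !fun_tgt1. reflexivity.
  - intro a. rewrite !fun_src2. reflexivity.
  - intro a. rewrite !fun_tgt2. reflexivity.
  - intro x. rewrite !fun_id1. reflexivity.
  - intro f. rewrite !fun_id2. reflexivity.
  - intros f g fg. rewrite !fun_comp1; rewrite ?fun_tgt1, ?fun_src1, ?fg; reflexivity.
  - intros a b ab. rewrite !fun_vcomp; rewrite ?fun_tgt2, ?fun_src2, ?ab; reflexivity.
  - intros a b ab. rewrite !fun_hcomp;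
      rewrite ?fun_src2, ?fun_tgt1, ?fun_src1, ?ab; reflexivity.
Defined.

Section WeightedFunctors.
Variable C : TwoCat.

Definition weightless (f g : Ar C) (par_src : src1 f = src1 g)
  (par_tgt : tgt1 f = tgt1 g) : wcell C false :=
  mkW f g 0 par_src par_tgt (fun r _ => match Bool.diff_false_true r with end).

Definition forget_weight : TwoFun (Weighted C true) (Weighted C false).
Proof.
  refine (@Build_TwoFun (Weighted C true) (Weighted C false) (fun x => x) (fun f => f)
            (fun a => weightless (ws a) (wt a) (wpar_src a) (wpar_tgt a))
            _ _ _ _ _ _ _ _ _);
    try reflexivity.
  - intro f. apply wcell_eq; reflexivity.
  - intros a b ab. apply wcell_eq; simpl.
    + rewrite !ws_wvcomp. reflexivity.
    + rewrite !wt_wvcomp by assumption. reflexivity.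
    + rewrite wn_wvcomp by assumption. reflexivity.
  - intros a b ab. apply wcell_eq; simpl.
    + rewrite !ws_whcomp by assumption. reflexivity.
    + rewrite !wt_whcomp by assumption. reflexivity.
    + rewrite wn_whcomp by assumption. reflexivity.
Defined.

Definition boundary : TwoFun C (Weighted C false).
Proof.
  refine (@Build_TwoFun C (Weighted C false) (fun x => x) (fun f => f)
            (fun a => weightless (src2 a) (tgt2 a) (glob_src C a) (glob_tgt C a))
            _ _ _ _ _ _ _ _ _);
    try reflexivity.
  - intro f. apply wcell_eq; simpl; [apply id2_src | apply id2_tgt | reflexivity].
  - intros a b ab. apply wcell_eq; simpl.
    + rewrite ws_wvcomp. apply vcomp_src; assumption.
    + rewrite wt_wvcomp; [apply vcomp_tgt|]; assumption.
    + rewrite wn_wvcomp by assumption. reflexivity.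
  - intros a b ab. apply wcell_eq; simpl.
    + rewrite ws_whcomp; [apply hcomp_src|]; assumption.
    + rewrite wt_whcomp; [apply hcomp_tgt|]; assumption.
    + rewrite wn_whcomp by assumption. reflexivity.
Defined.

Variables (h : Computad) (D : Diagram h C).

Definition weigh_generators : Diagram h (Weighted C true) :=
  @Build_Diagram h (Weighted C true) (dO D) (dA D)
    (fun t => mkW (src2 (dC D t)) (tgt2 (dC D t)) 1 (glob_src C _) (glob_tgt C _)
                (fun _ one_zero => match PeanoNat.Nat.neq_succ_0 0 one_zero with end))
    (dA_src h C D) (dA_tgt h C D) (dC_src h C D) (dC_tgt h C D).

Definition boundary_diagram : Diagram h (Weighted C false) :=
  @Build_Diagram h (Weighted C false) (dO D) (dA D)
    (fun t => weightless (src2 (dC D t)) (tgt2 (dC D t)) (glob_src C _) (glob_tgt C _))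
    (dA_src h C D) (dA_tgt h C D) (dC_src h C D) (dC_tgt h C D).

Lemma free_weighting : free_on h C D ->
  exists W : TwoFun C (Weighted C true),
    forall a, ws (fC W a) = src2 a /\ wt (fC W a) = tgt2 a.
Proof.
  intro free.
  destruct (free _ weigh_generators) as [[W [WO [WA WC]]] _].
  destruct (free _ boundary_diagram) as [_ unique].
  assert (W_boundary : diag_comp_eq D (twofun_comp W forget_weight) boundary_diagram).
  { split; [|split]; intro; simpl.
    - apply WO.
    - apply WA.
    - rewrite WC. apply wcell_eq; reflexivity. }
  assert (id_boundary : diag_comp_eq D boundary boundary_diagram)
    by (split; [|split]; reflexivity).
  (* [W] followed by [forget_weight] agrees with [boundary] on generators, so [W]
     is the identity on 1-cells. *)
  destruct (unique _ _ W_boundary id_boundary) as [_ [W_id _]].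
  change (forall f, fA W f = f) in W_id.
  exists W. intro a. split.
  - rewrite <- (W_id (src2 a)). apply (fun_src2 _ _ W).
  - rewrite <- (W_id (tgt2 a)). apply (fun_tgt2 _ _ W).
Qed.

Lemma free_section_is_endo : free_on h C D ->
  forall a c : Ce C, tgt2 a = src2 c -> vcomp a c = id2 (src2 a) -> src2 a = tgt2 a.
Proof.
  intros free a c ac retraction.
  destruct (free_weighting free) as [W W_bd].
  destruct (W_bd a) as [Wa_src Wa_tgt]. destruct (W_bd c) as [Wc_src _].
  assert (weight_sum := f_equal wn (fun_vcomp _ _ W a c ac)).
  rewrite retraction, fun_id2 in weight_sum. simpl in weight_sum.
  rewrite wn_wvcomp in weight_sum by (rewrite Wa_tgt, Wc_src; assumption).
  rewrite <- Wa_src, <- Wa_tgt. apply wrigid; [reflexivity | lia].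
Qed.
End WeightedFunctors.

Lemma free_thin_antisym (M : TwoCat) : is_free M -> locally_thin M ->
  forall a c : Ce M, tgt2 a = src2 c -> tgt2 c = src2 a -> src2 a = tgt2 a.
Proof.
  intros [h [F [D [free [I [J [_ [_ [_ [_ [IJ_id _]]]]]]]]]]] thin a c ac ca.
  assert (retraction : vcomp a c = id2 (src2 a)).
  { apply thin.
    - rewrite vcomp_src, id2_src by assumption. reflexivity.
    - rewrite vcomp_tgt, id2_tgt by assumption. assumption. }
  assert (endo : src2 (fC J a) = tgt2 (fC J a)).
  { apply (free_section_is_endo F h D free _ (fC J c)).
    - rewrite fun_tgt2, fun_src2, ac. reflexivity.
    - rewrite <- fun_vcomp, retraction, fun_id2, fun_src2 by assumption. reflexivity. }
  rewrite fun_src2, fun_tgt2 in endo.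
  rewrite <- (IJ_id (src2 a)), <- (IJ_id (tgt2 a)), endo. reflexivity.
Qed.

Section Detour.
Variables (C : TwoCat) (D : Diagram frak_g C).

Local Notation d := (dA D e_d).
Local Notation d0 := (dA D e_d0).
Local Notation d1 := (dA D e_d1).
Local Notation s0 := (dA D e_s0).
Local Notation n0 := (dC D t_n0).
Local Notation n1 := (dC D t_n1).
Local Notation theta := (dC D t_theta).

Lemma d_src : src1 d = dO D g0. Proof. exact (dA_src _ _ D e_d). Qed.
Lemma d_tgt : tgt1 d = dO D g1. Proof. exact (dA_tgt _ _ D e_d). Qed.
Lemma d0_src : src1 d0 = dO D g1. Proof. exact (dA_src _ _ D e_d0). Qed.
Lemma d0_tgt : tgt1 d0 = dO D g2. Proof. exact (dA_tgt _ _ D e_d0). Qed.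
Lemma d1_src : src1 d1 = dO D g1. Proof. exact (dA_src _ _ D e_d1). Qed.
Lemma d1_tgt : tgt1 d1 = dO D g2. Proof. exact (dA_tgt _ _ D e_d1). Qed.
Lemma s0_src : src1 s0 = dO D g2. Proof. exact (dA_src _ _ D e_s0). Qed.

Lemma n0_src : src2 n0 = comp1 d0 s0.
Proof. rewrite (dC_src _ _ D t_n0). cbn. rewrite <- d0_src, comp1_idl. reflexivity. Qed.

Lemma n0_tgt : tgt2 n0 = id1 (dO D g1).
Proof. exact (dC_tgt _ _ D t_n0). Qed.

Lemma n1_src : src2 n1 = id1 (dO D g1).
Proof. exact (dC_src _ _ D t_n1). Qed.

Lemma n1_tgt : tgt2 n1 = comp1 d1 s0.
Proof. rewrite (dC_tgt _ _ D t_n1). cbn. rewrite <- d1_src, comp1_idl. reflexivity. Qed.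

Lemma theta_src : src2 theta = comp1 d d1.
Proof. rewrite (dC_src _ _ D t_theta). cbn. rewrite <- d_src, comp1_idl. reflexivity. Qed.

Lemma theta_tgt : tgt2 theta = comp1 d d0.
Proof. rewrite (dC_tgt _ _ D t_theta). cbn. rewrite <- d_src, comp1_idl. reflexivity. Qed.

Definition detour_out : Ce C := hcomp (id2 d) n1.
Definition theta_whisker : Ce C := hcomp theta (id2 s0).
Definition n0_whisker : Ce C := hcomp (id2 d) n0.
Definition detour_back : Ce C := vcomp theta_whisker n0_whisker.
Definition detour_loop : Ce C := vcomp detour_out detour_back.

Lemma detour_out_composable : tgt1 (src2 (id2 d)) = src1 (src2 n1).
Proof. rewrite id2_src, n1_src, id1_src. exact d_tgt. Qed.

Lemma theta_whisker_composable : tgt1 (src2 theta) = src1 (src2 (id2 s0)).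
Proof. rewrite id2_src, theta_src, comp1_tgt, d1_tgt, s0_src; [|rewrite d_tgt, d1_src]; reflexivity. Qed.

Lemma n0_whisker_composable : tgt1 (src2 (id2 d)) = src1 (src2 n0).
Proof. rewrite id2_src, n0_src, comp1_src, d_tgt, d0_src; [|rewrite d0_tgt, s0_src]; reflexivity. Qed.

Lemma d1_s0_composable : tgt1 d1 = src1 s0.
Proof. rewrite d1_tgt, s0_src. reflexivity. Qed.

Lemma d_d1_s0_composable : tgt1 d = src1 (comp1 d1 s0).
Proof. rewrite comp1_src, d_tgt, d1_src by exact d1_s0_composable. reflexivity. Qed.

Lemma detour_out_src : src2 detour_out = d.
Proof.
  unfold detour_out. rewrite hcomp_src, id2_src, n1_src by exact detour_out_composable.
  rewrite <- d_tgt. apply comp1_idr.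
Qed.

Lemma detour_out_tgt : tgt2 detour_out = comp1 d (comp1 d1 s0).
Proof.
  unfold detour_out. rewrite hcomp_tgt, id2_tgt, n1_tgt by exact detour_out_composable.
  reflexivity.
Qed.

Lemma detour_back_composable : tgt2 theta_whisker = src2 n0_whisker.
Proof.
  unfold theta_whisker, n0_whisker.
  rewrite hcomp_tgt, hcomp_src, id2_tgt, id2_src, theta_tgt, n0_src
    by (exact theta_whisker_composable || exact n0_whisker_composable).
  apply comp1_assoc; [rewrite d_tgt, d0_src | rewrite d0_tgt, s0_src]; reflexivity.
Qed.

Lemma detour_back_src : src2 detour_back = comp1 d (comp1 d1 s0).
Proof.
  unfold detour_back, theta_whisker.
  rewrite vcomp_src, hcomp_src, id2_src, theta_src
    by (exact detour_back_composable || exact theta_whisker_composable).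
  apply comp1_assoc; [rewrite d_tgt, d1_src; reflexivity | exact d1_s0_composable].
Qed.

Lemma detour_back_tgt : tgt2 detour_back = d.
Proof.
  unfold detour_back, n0_whisker.
  rewrite vcomp_tgt, hcomp_tgt, id2_tgt, n0_tgt
    by (exact detour_back_composable || exact n0_whisker_composable).
  rewrite <- d_tgt. apply comp1_idr.
Qed.

Lemma detour_loop_composable : tgt2 detour_out = src2 detour_back.
Proof. rewrite detour_out_tgt, detour_back_src. reflexivity. Qed.

Lemma detour_loop_src : src2 detour_loop = d.
Proof.
  unfold detour_loop. rewrite vcomp_src by exact detour_loop_composable.
  exact detour_out_src.
Qed.

Lemma detour_loop_tgt : tgt2 detour_loop = d.
Proof.
  unfold detour_loop. rewrite vcomp_tgt by exact detour_loop_composable.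
  exact detour_back_tgt.
Qed.

Lemma fC_detour_loop (X : TwoCat) (G : TwoFun C X) :
  fC G detour_loop =
  vcomp (hcomp (id2 (fA G d)) (fC G n1))
        (vcomp (hcomp (fC G theta) (id2 (fA G s0))) (hcomp (id2 (fA G d)) (fC G n0))).
Proof.
  unfold detour_loop. rewrite (fun_vcomp _ _ G _ _ detour_loop_composable).
  unfold detour_back. rewrite (fun_vcomp _ _ G _ _ detour_back_composable).
  unfold detour_out, theta_whisker, n0_whisker.
  rewrite (fun_hcomp _ _ G _ _ detour_out_composable),
          (fun_hcomp _ _ G _ _ theta_whisker_composable),
          (fun_hcomp _ _ G _ _ n0_whisker_composable), !fun_id2.
  reflexivity.
Qed.

Lemma fA_detour (X : TwoCat) (G : TwoFun C X) :
  fA G (comp1 d (comp1 d1 s0)) = comp1 (fA G d) (comp1 (fA G d1) (fA G s0)).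
Proof.
  rewrite (fun_comp1 _ _ G _ _ d_d1_s0_composable), (fun_comp1 _ _ G _ _ d1_s0_composable).
  reflexivity.
Qed.
Lemma free_thin_identifies_detour (M : TwoCat) (q : TwoFun C M) :
  is_free M -> locally_thin M -> fA q d = fA q (comp1 d (comp1 d1 s0)).
Proof.
  intros M_free M_thin.
  pose proof (free_thin_antisym M M_free M_thin (fC q detour_out) (fC q detour_back))
    as antisym.
  rewrite !fun_src2, !fun_tgt2, detour_out_src, detour_out_tgt,
          detour_back_src, detour_back_tgt in antisym.
  apply antisym; reflexivity.
Qed.
End Detour.

Definition nat_codiscrete : TwoCat.
Proof.
  refine {| Ob := unit; Ar := nat; Ce := (nat * nat)%type;
    src1 := fun _ => tt; tgt1 := fun _ => tt; src2 := fst; tgt2 := snd;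
    id1 := fun _ => 0; id2 := fun f => (f, f); comp1 := Nat.add;
    vcomp := fun a b => (fst a, snd b);
    hcomp := fun a b => (fst a + fst b, snd a + snd b) |};
  intros; repeat match goal with x : (nat * nat)%type |- _ => destruct x end;
  repeat match goal with x : unit |- _ => destruct x end;
  simpl in *; try reflexivity; try lia; try (f_equal; lia).
Defined.

Lemma nat_codiscrete_thin : locally_thin nat_codiscrete.
Proof. intros [m n] [m' n']; simpl; intros; subst; reflexivity. Qed.

Definition count_s0_arrow (e : gE) : nat := match e with e_s0 => 1 | _ => 0 end.

Definition count_s0 : Diagram frak_g nat_codiscrete :=
  @Build_Diagram frak_g nat_codiscrete (fun _ => tt) count_s0_arrow
    (fun t => (eval_path nat_codiscrete (fun _ => tt) count_s0_arrow (gT_src t),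
               eval_path nat_codiscrete (fun _ => tt) count_s0_arrow (gT_tgt t)))
    (fun _ => eq_refl) (fun _ => eq_refl) (fun _ => eq_refl) (fun _ => eq_refl).

Definition Z_2cells : TwoCat.
Proof.
  refine {| Ob := unit; Ar := unit; Ce := Z;
    src1 := fun _ => tt; tgt1 := fun _ => tt; src2 := fun _ => tt; tgt2 := fun _ => tt;
    id1 := fun _ => tt; id2 := fun _ => 0%Z; comp1 := fun _ _ => tt;
    vcomp := Z.add; hcomp := Z.add |};
  intros; repeat match goal with x : unit |- _ => destruct x end;
  simpl in *; try reflexivity; try lia.
Defined.

Lemma Z_2cells_groupoidal : locally_groupoidal Z_2cells.
Proof. intro a. exists (- a)%Z. simpl. repeat split; lia. Qed.

Definition count_theta : Diagram frak_g Z_2cells.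
Proof.
  refine (@Build_Diagram frak_g Z_2cells (fun _ => tt) (fun _ => tt)
            (fun t => match t with t_theta => 1%Z | _ => 0%Z end) _ _ _ _);
    intros [] ; reflexivity.
Defined.

Theorem mainTheorem17 :
  forall (F : TwoCat) (D : Diagram frak_g F), free_on frak_g F D ->
    (forall (M : TwoCat) (q : TwoFun F M), is_M2bar F M q -> ~ is_free M) /\
    ~ locally_thin F /\
    (forall (L : TwoCat) (r : TwoFun F L), is_L2bar F L r -> ~ locally_thin L).
Proof.
  intros F D free.
  destruct (free _ count_theta) as [[T [_ [_ T_gen]]] _].
  assert (T_loop : fC T (detour_loop F D) = 1%Z)
    by (rewrite fC_detour_loop, !T_gen; reflexivity).
  assert (T_id : fC T (id2 (dA D e_d)) = 0%Z) by (rewrite fun_id2; reflexivity).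
  split; [|split].
  - intros M q [M_thin M_univ] M_free.
    pose proof (free_thin_identifies_detour F D M q M_free M_thin) as collapse.
    destruct (free _ count_s0) as [[S [_ [S_gen _]]] _].
    destruct (M_univ _ nat_codiscrete_thin S) as [[H [_ [H_q _]]] _].
    apply (f_equal (fA H)) in collapse.
    rewrite !H_q, fA_detour, !S_gen in collapse. discriminate.
  - intro F_thin.
    assert (loop_id : detour_loop F D = id2 (dA D e_d)).
    { apply F_thin.
      - rewrite id2_src. apply detour_loop_src.
      - rewrite id2_tgt. apply detour_loop_tgt. }
    rewrite loop_id, T_id in T_loop. discriminate.
  - intros L r [_ L_univ] L_thin.
    destruct (L_univ _ Z_2cells_groupoidal T) as [[H [_ [_ H_r]]] _].
    assert (loop_id : fC r (detour_loop F D) = fC r (id2 (dA D e_d))).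
    { apply L_thin.
      - rewrite !fun_src2, id2_src, detour_loop_src. reflexivity.
      - rewrite !fun_tgt2, id2_tgt, detour_loop_tgt. reflexivity. }
    apply (f_equal (fC H)) in loop_id. rewrite !H_r, T_loop, T_id in loop_id.
    discriminate.
Qed.
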